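(* Consider the following market for a sin good subject to a per-unit tax $t>0$. There are $N$ firms $k=1,\dots,N$ producing at common constant marginal cost $m$ and competing à la Bertrand–Nash. Each firm $k$ simultaneously chooses a salient posted price $p^s_k$ and a shrouded tax surcharge $\tau_k\in\{0,t\}$ (it ''shrouds'' if $\tau_k=t$); its effective consumer price is $p_k=p^s_k+\tau_k$ and its producer price is $p_k-t$. A fraction $\lambda$ of consumers are attentive: they observe all effective prices and all shrouding decisions, and buying from a shrouding firm entails a fixed disutility $s\ge 0$. The remaining fraction $1-\lambda$ are inattentive: they observe posted prices but perceive the surcharge of a shrouding firm as $\theta t$; demand of inattentive consumers is split equally among the firms with the lowest posted price. Firms cannot price-discriminate between consumer types. If $0<\lambda<1$ and $\theta<1$, then there is no pure-strategy equilibrium in which no firm shrouds taxes. If moreover $s>0$, then there is no symmetric pure-strategy equilibrium.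
   Context: Consumers otherwise behave as cost-minimizing buyers of a homogeneous good given their (perceived) prices; a symmetric equilibrium is one in which all firms choose the same $(p^s_k,\tau_k)$. *)

From HB Require Import structures.
From mathcomp Require Import all_boot all_order all_algebra.
Set Implicit Arguments. Unset Strict Implicit. Unset Printing Implicit Defensive.
Import Order.TTheory GRing.Theory Num.Theory.
Local Open Scope ring_scope.

Section Market.
Variable R : realFieldType.
Variable N : nat.

(* A firm's strategy: (salient posted price p^s, shrouds?) ; shrouds = true
   means tau = t, shrouds = false means tau = 0. *)
Definition strategy := (R * bool)%type.
Definition profile := 'I_N -> strategy.

Definition eff_price (t : R) (x : strategy) : R := x.1 + (if x.2 then t else 0).

Definition attentive_cost (t s : R) (x : strategy) : R :=
  eff_price t x + (if x.2 then s else 0).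

Definition perceived_price (t theta : R) (x : strategy) : R :=
  x.1 + (if x.2 then theta * t else 0).

Definition minimizers (c : 'I_N -> R) : {set 'I_N} :=
  [set j | [forall i, c j <= c i]].
Definition share (c : 'I_N -> R) (k : 'I_N) : R :=
  if k \in minimizers c then (#|minimizers c|%:R)^-1 else 0.

(* demand of firm k: mass lam of attentive and 1 - lam of inattentive
   consumers, each buying one unit from a cheapest (perceived) firm *)
Definition demand (t s theta lam : R) (sigma : profile) (k : 'I_N) : R :=
  lam * share (fun j => attentive_cost t s (sigma j)) k
  + (1 - lam) * share (fun j => perceived_price t theta (sigma j)) k.

Definition profit (m t s theta lam : R) (sigma : profile) (k : 'I_N) : R :=
  (eff_price t (sigma k) - t - m) * demand t s theta lam sigma k.

Definition deviate (sigma : profile) (k : 'I_N) (d : strategy) : profile :=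
  fun j => if j == k then d else sigma j.

Definition is_equilibrium (m t s theta lam : R) (sigma : profile) : Prop :=
  forall (k : 'I_N) (d : strategy),
    profit m t s theta lam (deviate sigma k d) k <= profit m t s theta lam sigma k.

Definition symmetric_profile (sigma : profile) : Prop := forall i j : 'I_N, sigma i = sigma j.

Definition no_firm_shrouds (sigma : profile) : Prop := forall k : 'I_N, (sigma k).2 = false.

End Market.

(* If nobody shrouds, a firm earning nothing could shroud the tax and post a
   price just below the lowest one: inattentive consumers then perceive it as
   cheapest, and since theta < 1 the hidden part of the tax more than pays for
   the price cut.  Hence every firm earns a positive profit, so every firm sells
   at the lowest price, and the profile is symmetric.  In a symmetric profile
   each firm serves 1/N of the market, so a positive margin invites undercutting
   (all demand at 3/4 of the margin beats 1/N of it); hence margins are zero.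
   With no shrouding this contradicts the positive profits above; with
   shrouding everywhere, unshrouding at a posted price raised by t + s/2 wins
   all attentive consumers at margin s/2 > 0. *)
From Pilot Require Import Defs.
From HB Require Import structures.
From mathcomp Require Import all_boot all_order all_algebra.
From mathcomp Require Import ring lra.
Import Order.TTheory GRing.Theory Num.Theory.
Local Open Scope ring_scope.

Section Share.
Context {R : realFieldType} {N : nat}.
Implicit Types (c : 'I_N -> R) (k : 'I_N).

Lemma minimizersP c k : reflect (forall i, c k <= c i) (k \in minimizers c).
Proof. by rewrite inE; apply: forallP. Qed.

Lemma eq_share c c' : c =1 c' -> share c =1 share c'.
Proof.
move=> eq_c k; rewrite /share.
suff -> : minimizers c = minimizers c' by [].
by apply/setP => j; rewrite !inE; apply: eq_forallb => i; rewrite !eq_c.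
Qed.

Lemma share_ge0 c k : 0 <= share c k.
Proof. by rewrite /share; case: ifP => // _; rewrite invr_ge0 ler0n. Qed.

Lemma share_gt0 c k : (0 < share c k) = (k \in minimizers c).
Proof.
rewrite /share; case: ifP => [k_min|_]; last by rewrite ltxx.
by rewrite invr_gt0 ltr0n card_gt0; apply/set0Pn; exists k.
Qed.

Lemma share_const c k : (forall i j, c i = c j) -> share c k = N%:R^-1.
Proof.
move=> c_const; rewrite /share.
have -> : minimizers c = setT.
  by apply/setP => j; rewrite in_setT; apply/minimizersP => i; rewrite (c_const j i).
by rewrite in_setT cardsT card_ord.
Qed.

Lemma share_strict_min c k : (forall j, j != k -> c k < c j) -> share c k = 1.
Proof.
move=> k_strict; rewrite /share.
have -> : minimizers c = [set k].
  apply/setP => j; rewrite in_set1; apply/minimizersP/eqP => [j_min | -> i].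
    by case: (eqVneq j k) => // /k_strict; rewrite ltNge j_min.
  by case: (eqVneq i k) => [-> // | /k_strict/ltW].
by rewrite set11 cards1 invr1.
Qed.

End Share.

Section Market.
Context {R : realFieldType} {N : nat} {m t s theta lam : R}.
Hypothesis lam01 : 0 < lam < 1.
Implicit Types (sigma : profile R N) (k : 'I_N) (x d : strategy R).

Local Notation demand := (demand t s theta lam).
Local Notation profit := (profit m t s theta lam).
Local Notation is_equilibrium := (is_equilibrium m t s theta lam).
Local Notation attentive_costs sigma := (fun j => attentive_cost t s (sigma j)).
Local Notation perceived_prices sigma := (fun j => perceived_price t theta (sigma j)).

Definition margin x := eff_price t x - t - m.

Lemma profitE sigma k : profit sigma k = margin (sigma k) * demand sigma k.
Proof. by []. Qed.

Lemma profit_deviate sigma k d :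
  profit (deviate sigma k d) k = margin d * demand (deviate sigma k d) k.
Proof. by rewrite profitE /deviate eqxx. Qed.

Lemma demand_ge0 sigma k : 0 <= demand sigma k.
Proof.
case/andP: lam01 => lam_gt0 lam_lt1.
have := share_ge0 (attentive_costs sigma) k.
have := share_ge0 (perceived_prices sigma) k.
rewrite /Defs.demand; nra.
Qed.

Lemma demand_gt0 sigma k :
  0 < share (attentive_costs sigma) k \/ 0 < share (perceived_prices sigma) k ->
  0 < demand sigma k.
Proof.
case/andP: lam01 => lam_gt0 lam_lt1.
have := share_ge0 (attentive_costs sigma) k.
have := share_ge0 (perceived_prices sigma) k.
rewrite /Defs.demand => ? ? [] ?; nra.
Qed.

Lemma demand_symmetric sigma k :
  symmetric_profile sigma -> demand sigma k = N%:R^-1.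
Proof.
move=> sym; rewrite /Defs.demand !share_const => [|i j|i j]; rewrite ?(sym i j) //.
by ring.
Qed.

Lemma demand_no_shrouding sigma k :
  no_firm_shrouds sigma -> demand sigma k = share (fun j => (sigma j).1) k.
Proof.
move=> no_shroud.
have att : attentive_costs sigma =1 (fun j => (sigma j).1).
  by move=> j; rewrite /attentive_cost /eff_price no_shroud !addr0.
have perc : perceived_prices sigma =1 (fun j => (sigma j).1).
  by move=> j; rewrite /perceived_price no_shroud addr0.
by rewrite /Defs.demand (eq_share _ _ att) (eq_share _ _ perc); ring.
Qed.

Lemma share_deviate_strict_min (f : strategy R -> R) sigma k d :
  (forall j, j != k -> f d < f (sigma j)) ->
  share (fun j => f (deviate sigma k d j)) k = 1.
Proof.
by move=> lt_d; apply: share_strict_min => j jk; rewrite /deviate eqxx (negbTE jk) lt_d.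
Qed.

Lemma demand_deviate_gt0 sigma k d :
  (forall j, j != k -> attentive_cost t s d < attentive_cost t s (sigma j)) \/
  (forall j, j != k -> perceived_price t theta d < perceived_price t theta (sigma j)) ->
  0 < demand (deviate sigma k d) k.
Proof.
by case=> lt_d; apply: demand_gt0; [left | right];
  rewrite (share_deviate_strict_min _ _ _ _ lt_d) ltr01.
Qed.

Lemma demand_deviate_undercut sigma k d :
  (forall j, j != k -> attentive_cost t s d < attentive_cost t s (sigma j)) ->
  (forall j, j != k -> perceived_price t theta d < perceived_price t theta (sigma j)) ->
  demand (deviate sigma k d) k = 1.
Proof.
move=> /share_deviate_strict_min att /share_deviate_strict_min perc.
by rewrite /Defs.demand att perc; ring.
Qed.

Lemma equilibrium_profit_ge0 sigma k : is_equilibrium sigma -> 0 <= profit sigma k.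
Proof.
move=> eq_sigma; apply: le_trans (eq_sigma k (m, true)).
by rewrite profit_deviate /margin /eff_price /= addrK subrr mul0r.
Qed.

Lemma equilibrium_profit_gt0 sigma k d :
  is_equilibrium sigma -> 0 < margin d -> 0 < demand (deviate sigma k d) k ->
  0 < profit sigma k.
Proof.
move=> eq_sigma margin_d demand_d; apply: lt_le_trans (eq_sigma k d).
by rewrite profit_deviate mulr_gt0.
Qed.

Lemma symmetric_equilibrium_margin0 sigma k :
  (1 < N)%N -> is_equilibrium sigma -> symmetric_profile sigma -> margin (sigma k) = 0.
Proof.
move=> N_gt1 eq_sigma sym.
have invN_gt0 : 0 < N%:R^-1 :> R by rewrite invr_gt0 ltr0n (ltnW N_gt1).
have invN_le : N%:R^-1 <= 2^-1 :> R.
  by rewrite lef_pV2 ?posrE ?ltr0n ?(ltnW N_gt1) // ler_nat.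
have profit_k : profit sigma k = margin (sigma k) * N%:R^-1.
  by rewrite profitE demand_symmetric.
apply/eqP; rewrite eq_le; apply/andP; split; last first.
  by rewrite -(pmulr_lge0 _ invN_gt0) -profit_k equilibrium_profit_ge0.
rewrite leNgt; apply/negP => margin_gt0.
set x := sigma k in margin_gt0 profit_k *; set e := margin x / 4.
have e_gt0 : 0 < e by rewrite divr_gt0.
pose d := (x.1 - e, x.2).
have cheaper_att j : j != k -> attentive_cost t s d < attentive_cost t s (sigma j).
  by rewrite (sym j k) /attentive_cost /eff_price /= -/x; lra.
have cheaper_perc j : j != k -> perceived_price t theta d < perceived_price t theta (sigma j).
  by rewrite (sym j k) /perceived_price /= -/x; lra.
have := eq_sigma k d.
rewrite profit_deviate demand_deviate_undercut //.
have margin_d : margin d = margin x - e by rewrite /margin /eff_price /=; ring.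
rewrite margin_d mulr1 profit_k.
have := ler_wpM2l (ltW margin_gt0) invN_le.
rewrite /e; lra.
Qed.

Lemma hidden_surcharge_profit_gt0 sigma k p0 :
  0 < t -> theta < 1 -> is_equilibrium sigma -> no_firm_shrouds sigma ->
  (forall j, p0 <= (sigma j).1) -> t + m <= p0 -> 0 < profit sigma k.
Proof.
move=> t_gt0 theta_lt1 eq_sigma no_shroud p0_min p0_ge.
have hidden_gt0 : 0 < t - theta * t.
  by rewrite -{1}(mul1r t) -mulrBl mulr_gt0 // subr_gt0.
(* Perceived price p0 - (1 - theta) t / 2, margin p0 - t - m + (1 - theta) t / 2. *)
apply: (@equilibrium_profit_gt0 _ _ (p0 - (1 + theta) * t / 2, true)) => //.
  by rewrite /margin /eff_price /=; lra.
apply: demand_deviate_gt0; right => j _.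
by rewrite /perceived_price no_shroud /=; have := p0_min j; lra.
Qed.

Lemma no_shrouding_equilibrium_profit_gt0 sigma k :
  0 < t -> theta < 1 -> is_equilibrium sigma -> no_firm_shrouds sigma ->
  0 < profit sigma k.
Proof.
move=> t_gt0 theta_lt1 eq_sigma no_shroud.
case: (@arg_minP _ _ _ k xpredT (fun j => (sigma j).1) isT) => k0 _ k0_min.
have : 0 <= margin (sigma k0).
  have := equilibrium_profit_ge0 _ k0 eq_sigma.
  rewrite profitE demand_no_shrouding // pmulr_lge0 // share_gt0.
  by apply/minimizersP => i; apply: k0_min.
rewrite /margin /eff_price no_shroud addr0 => margin_k0.
apply: (hidden_surcharge_profit_gt0 _ _ (sigma k0).1) => //; last by lra.
by move=> j; apply: k0_min.
Qed.

Lemma no_shrouding_equilibrium_symmetric sigma :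
  0 < t -> theta < 1 -> is_equilibrium sigma -> no_firm_shrouds sigma ->
  symmetric_profile sigma.
Proof.
move=> t_gt0 theta_lt1 eq_sigma no_shroud.
have cheapest k i : (sigma k).1 <= (sigma i).1.
  move: i; apply/minimizersP; rewrite -share_gt0 -demand_no_shrouding //.
  have profit_gt0 := no_shrouding_equilibrium_profit_gt0 _ k t_gt0 theta_lt1 eq_sigma no_shroud.
  rewrite lt_def demand_ge0 andbT.
  by apply: contraTneq profit_gt0 => demand0; rewrite profitE demand0 mulr0 ltxx.
move=> i j; move: (no_shroud i) (no_shroud j) (cheapest i j) (cheapest j i).
case: (sigma i) => [p_i b_i]; case: (sigma j) => [p_j b_j] /= -> -> le_ij le_ji.
by congr pair; apply/le_anti/andP.
Qed.

Lemma no_shrouding_not_equilibrium sigma :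
  (1 < N)%N -> 0 < t -> theta < 1 -> no_firm_shrouds sigma -> ~ is_equilibrium sigma.
Proof.
move=> N_gt1 t_gt0 theta_lt1 no_shroud eq_sigma.
have k : 'I_N := Ordinal (ltnW N_gt1).
have sym := no_shrouding_equilibrium_symmetric sigma t_gt0 theta_lt1 eq_sigma no_shroud.
have := no_shrouding_equilibrium_profit_gt0 sigma k t_gt0 theta_lt1 eq_sigma no_shroud.
by rewrite profitE (symmetric_equilibrium_margin0 sigma k N_gt1 eq_sigma sym) mul0r ltxx.
Qed.

Lemma symmetric_shrouding_not_equilibrium sigma k :
  (1 < N)%N -> 0 < s -> symmetric_profile sigma -> (sigma k).2 ->
  ~ is_equilibrium sigma.
Proof.
move=> N_gt1 s_gt0 sym shroud_k eq_sigma.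
have margin0 := symmetric_equilibrium_margin0 sigma k N_gt1 eq_sigma sym.
have : 0 < profit sigma k.
  apply: (@equilibrium_profit_gt0 _ _ (m + t + s / 2, false)) => //.
    by rewrite /margin /eff_price /=; lra.
  apply: demand_deviate_gt0; left => j _.
  move: margin0; rewrite (sym j k) /margin /attentive_cost /eff_price shroud_k /=.
  lra.
by rewrite profitE margin0 mul0r ltxx.
Qed.

End Market.

Arguments margin {R} m t x.

Theorem lemma2 (R : realFieldType) (N : nat) (m t s theta lam : R) :
  (1 < N)%N -> 0 < t -> 0 <= s -> 0 < lam < 1 -> theta < 1 ->
  (forall sigma : profile R N,
      no_firm_shrouds sigma -> ~ is_equilibrium m t s theta lam sigma) /\
  (0 < s -> forall sigma : profile R N,
      symmetric_profile sigma -> ~ is_equilibrium m t s theta lam sigma).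
Proof.
move=> N_gt1 t_gt0 _ lam01 theta_lt1.
split=> [sigma | s_gt0 sigma sym]; first exact: no_shrouding_not_equilibrium.
have k0 : 'I_N := Ordinal (ltnW N_gt1).
case shroud_k0: (sigma k0).2; first exact: symmetric_shrouding_not_equilibrium shroud_k0.
by apply: no_shrouding_not_equilibrium => // k; rewrite (sym k k0).
Qed.
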